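(* Let $K>0$, $K\neq 1$, and let \[ A_5=\begin{pmatrix} K & 1 & 1\\ 1 & K & 1\\ 1 & 1 & 1\end{pmatrix}. \] Then \[ S(A_5)=\begin{pmatrix} a & b & c\\ b & a & c\\ c & c & d\end{pmatrix} \] with \[ a=\frac{K\left(2K+1-\sqrt{4K+5}\right)}{2(K^2-1)},\quad b=\frac{2K+1-\sqrt{4K+5}}{2(K^2-1)},\quad d=\frac{K+2-\sqrt{4K+5}}{K-1},\quad c=\sqrt{bd}. \] Equivalently $S(A_5)=XA_5X$ with $X=\operatorname{diag}(x,x,z)$, $x^2=b$, $z^2=d$. Moreover $\lim_{K\to\infty}S(A_5)=I_3$.
   Context: For a positive $n\times n$ matrix $A$, the Sinkhorn limit $S(A)$ is the unique doubly stochastic matrix of the form $XAY$ with $X,Y$ positive diagonal matrices; it is the limit of alternately row scaling (dividing each row by its row sum) and column scaling (dividing each column by its column sum) starting from $A$. For a positive symmetric matrix $A$ there is a unique positive diagonal $X$ with $S(A)=XAX$. *)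

From HB Require Import structures.
From mathcomp Require Import all_boot all_order all_algebra.
From mathcomp Require Import all_classical all_reals all_analysis.
Set Implicit Arguments. Unset Strict Implicit. Unset Printing Implicit Defensive.
Import Order.TTheory GRing.Theory Num.Theory.
Import numFieldNormedType.Exports.
Local Open Scope ring_scope.

Definition doubly_stochastic (R : realType) (n : nat) (S : 'M[R]_n) : Prop :=
  (forall i j, 0 <= S i j) /\
  (forall i, \sum_(j < n) S i j = 1) /\
  (forall j, \sum_(i < n) S i j = 1).

Definition sinkhorn_spec (R : realType) (n : nat) (A S : 'M[R]_n) : Prop :=
  doubly_stochastic S /\
  exists x y : 'I_n -> R,
    (forall i, 0 < x i) /\ (forall j, 0 < y j) /\
    S = diag_mx (\row_i x i) *m A *m diag_mx (\row_j y j).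

(* The Sinkhorn limit S(A): the (unique, for positive A) doubly stochastic
   matrix of the form X A Y. *)
Definition sinkhorn (R : realType) (n : nat) (A : 'M[R]_n) : 'M[R]_n :=
  xget 0 (sinkhorn_spec A).

Definition mx3 (R : realType) (r : seq (seq R)) : 'M[R]_3 :=
  \matrix_(i < 3, j < 3) nth 0 (nth [::] r i) j.

Definition A5 (R : realType) (K : R) : 'M[R]_3 :=
  mx3 [:: [:: K; 1; 1]; [:: 1; K; 1]; [:: 1; 1; 1]].

Definition diag3 (R : realType) (x y z : R) : 'M[R]_3 :=
  diag_mx (\row_(i < 3) nth 0 [:: x; y; z] i).

From HB Require Import structures.
From mathcomp Require Import all_boot all_order all_algebra.
From mathcomp Require Import all_classical all_reals all_analysis.
From mathcomp Require Import ring lra.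
Import Order.TTheory GRing.Theory Num.Theory.
Import numFieldNormedType.Exports.
Local Open Scope classical_set_scope.
Local Open Scope ring_scope.
Set Implicit Arguments. Unset Strict Implicit.

(* The ansatz X = diag(x, x, z) reduces the Sinkhorn equations for A5 to
   (K + 1) x^2 + x z = 1 and 2 x z + z^2 = 1, i.e. with b = x^2, c = x z,
   d = z^2 to b = (1 - c) / (K + 1), d = 1 - 2 c and c^2 = b d; the last one
   is the quadratic (K - 1) c^2 + 3 c = 1, whose positive root is
   c = 2 / (sqrt(4K + 5) + 3).  The resulting positive doubly stochastic
   matrix is S(A5) because a positive matrix has only one scaling of that
   kind: if S and (p_i S_ij q_j) are both doubly stochastic, comparing the
   column of S at the minimum of q with its row at the maximum of p forces
   p and q to be constant, with product 1.  As K grows, c behaves like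
   K^(-1/2), so S(A5) tends to the identity. *)

Section WeightedMean.
Variables (R : numDomainType) (I : finType) (w : I -> R).
Hypotheses (w_gt0 : forall k, 0 < w k) (w_sum1 : \sum_k w k = 1).

Lemma wmean_le (f : I -> R) M : (forall k, f k <= M) -> \sum_k w k * f k <= M.
Proof.
move=> fM; rewrite -[leRHS]mul1r -w_sum1 mulr_suml.
by apply: ler_sum => k _; rewrite ler_wpM2l // ltW.
Qed.

Lemma wmean_ge (f : I -> R) m : (forall k, m <= f k) -> m <= \sum_k w k * f k.
Proof.
move=> mf; rewrite -lerN2 -sumrN; under eq_bigr do rewrite -mulrN.
by apply: wmean_le => k; rewrite lerN2.
Qed.

Lemma wmean_eq_ub (f : I -> R) M :
  (forall k, f k <= M) -> \sum_k w k * f k = M -> forall k, f k = M.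
Proof.
move=> fM fE k.
have gap_ge0 l : 0 <= w l * (M - f l) by rewrite mulr_ge0 ?subr_ge0 // ltW.
have gap_sum0 : \sum_k w k * (M - f k) = 0.
  under eq_bigr do rewrite mulrBr.
  by rewrite sumrB -mulr_suml w_sum1 mul1r fE subrr.
have /eqP := psumr_eq0P (fun l _ => gap_ge0 l) gap_sum0 (i := k) isT.
by rewrite mulf_eq0 gt_eqF //= subr_eq0 => /eqP.
Qed.

End WeightedMean.

Section SinkhornUniqueness.
Variable R : realType.

Lemma doubly_stochastic_scaling_eq1 n (S : 'M[R]_n.+1) (p q : 'I_n.+1 -> R) :
  (forall i j, 0 < S i j) -> doubly_stochastic S ->
  (forall i, 0 < p i) -> (forall j, 0 < q j) ->
  doubly_stochastic (\matrix_(i, j) (p i * S i j * q j)) ->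
  forall i j, p i * q j = 1.
Proof.
move=> S_gt0 [_ [rowS colS]] p_gt0 q_gt0 [_ [rowT colT]].
have colE j : q j * \sum_i S i j * p i = 1.
  rewrite -(colT j) mulr_sumr; apply: eq_bigr => i _; rewrite mxE; ring.
have rowE i : p i * \sum_j S i j * q j = 1.
  rewrite -(rowT i) mulr_sumr; apply: eq_bigr => j _; rewrite mxE; ring.
have [i0 _ p_le] := @arg_maxP _ _ _ ord0 xpredT p erefl.
have [j0 _ q_ge] := @arg_minP _ _ _ ord0 xpredT q erefl.
have col_le : \sum_i S i j0 * p i <= p i0.
  by apply: (wmean_le (fun i => S_gt0 i j0) (colS j0)) => i; apply: p_le.
have row_ge : q j0 <= \sum_j S i0 j * q j.
  by apply: (wmean_ge (fun j => S_gt0 i0 j) (rowS i0)) => j; apply: q_ge.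
have pq0 : p i0 * q j0 = 1.
  apply: le_anti; apply/andP; split.
    by rewrite -(rowE i0) ler_pM2l.
  by rewrite -(colE j0) [p i0 * _]mulrC ler_pM2l.
have col0 : \sum_i S i j0 * p i = p i0.
  apply: (mulfI (lt0r_neq0 (q_gt0 j0))).
  by rewrite colE mulrC.
have p_const i : p i = p i0.
  exact: (wmean_eq_ub (fun i => S_gt0 i j0) (colS j0) (fun i => p_le i isT) col0).
move=> i j; rewrite -(colE j) p_const.
under eq_bigr do rewrite p_const.
by rewrite -mulr_suml colS mul1r mulrC.
Qed.

Lemma diag_mul_mx_diag_entry n (A : 'M[R]_n) (x y : 'I_n -> R) i j :
  (diag_mx (\row_i x i) *m A *m diag_mx (\row_j y j)) i j = x i * A i j * y j.
Proof. by rewrite mul_diag_mx mul_mx_diag !mxE. Qed.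

Lemma sinkhorn_spec_uniq n (A S1 S2 : 'M[R]_n.+1) :
  (forall i j, 0 < A i j) -> sinkhorn_spec A S1 -> sinkhorn_spec A S2 -> S1 = S2.
Proof.
move=> A_gt0 [ds1 [x1 [y1 [x1_gt0 [y1_gt0 S1E]]]]] [ds2 [x2 [y2 [x2_gt0 [y2_gt0 S2E]]]]].
pose p i := x2 i / x1 i; pose q j := y2 j / y1 j.
have S1_gt0 i j : 0 < S1 i j by rewrite S1E diag_mul_mx_diag_entry !mulr_gt0.
have S2E' : S2 = \matrix_(i, j) (p i * S1 i j * q j).
  apply/matrixP => i j; rewrite mxE S2E S1E !diag_mul_mx_diag_entry /p /q.
  by field; rewrite !gt_eqF.
have p_gt0 i : 0 < p i by rewrite divr_gt0.
have q_gt0 j : 0 < q j by rewrite divr_gt0.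
have pq1 := doubly_stochastic_scaling_eq1 S1_gt0 ds1 p_gt0 q_gt0.
move: ds2; rewrite S2E' => /pq1 {}pq1.
by apply/matrixP => i j; rewrite mxE mulrAC pq1 mul1r.
Qed.

Lemma sinkhorn_eq n (A S : 'M[R]_n.+1) :
  (forall i j, 0 < A i j) -> sinkhorn_spec A S -> sinkhorn A = S.
Proof.
move=> A_gt0 specS.
have spec_sinkhorn : sinkhorn_spec A (sinkhorn A) by apply: xgetPex; exists S.
exact: sinkhorn_spec_uniq A_gt0 spec_sinkhorn specS.
Qed.

End SinkhornUniqueness.

Definition S5c (R : realType) (K : R) : R := 2 / (Num.sqrt (4 * K + 5) + 3).
Definition S5b (R : realType) (K : R) : R := (1 - S5c K) / (K + 1).
Definition S5d (R : realType) (K : R) : R := 1 - 2 * S5c K.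

Definition S5 (R : realType) (K : R) : 'M[R]_3 :=
  mx3 [:: [:: K * S5b K; S5b K; S5c K];
          [:: S5b K; K * S5b K; S5c K];
          [:: S5c K; S5c K; S5d K]].

Section A5Scaling.
Variables (R : realType) (K : R).
Hypothesis K_gt0 : 0 < K.
Local Notation s := (Num.sqrt (4 * K + 5)).
Local Notation c := (S5c K).
Local Notation x := (Num.sqrt (S5b K)).
Local Notation z := (Num.sqrt (S5d K)).

Lemma sqrt45_sqr : s ^+ 2 = 4 * K + 5.
Proof. by rewrite sqr_sqrtr //; move: K_gt0; lra. Qed.

Lemma sqrt45_gt1 : 1 < s.
Proof. by move: sqrt45_sqr (sqrtr_ge0 (4 * K + 5)) K_gt0; nra. Qed.

Lemma S5c_gt0 : 0 < c.
Proof. by rewrite divr_gt0 //; move: sqrt45_gt1; lra. Qed.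

Lemma S5c_lt_half : 2 * c < 1.
Proof. by rewrite mulrA ltr_pdivrMr; move: sqrt45_gt1; lra. Qed.

Lemma S5c_root : (K - 1) * c ^+ 2 + 3 * c = 1.
Proof.
move: sqrt45_gt1 sqrt45_sqr; rewrite /S5c.
set t := Num.sqrt _ => t_gt1 t_sqr.
have -> : K = (t ^+ 2 - 5) / 4 by rewrite t_sqr; field.
by field; lra.
Qed.

Lemma S5b_gt0 : 0 < S5b K.
Proof. by rewrite /S5b divr_gt0 //; move: S5c_lt_half K_gt0; lra. Qed.

Lemma S5d_gt0 : 0 < S5d K.
Proof. by rewrite /S5d; move: S5c_lt_half; lra. Qed.

Lemma S5c_sqr : c ^+ 2 = S5b K * S5d K.
Proof.
have root := S5c_root; have K1_neq0 : K + 1 != 0 by rewrite lt0r_neq0 ?addr_gt0.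
rewrite /S5b /S5d mulrAC -[c ^+ 2](mulfK K1_neq0).
by congr (_ / _); nra.
Qed.

Lemma sqrt_S5bd : Num.sqrt (S5b K * S5d K) = c.
Proof. by rewrite -S5c_sqr sqrtr_sqr ger0_norm // ltW // S5c_gt0. Qed.

Lemma S5_scaling : diag3 x x z *m A5 K *m diag3 x x z = S5 K.
Proof.
have xx : x * x = S5b K by rewrite -expr2 sqr_sqrtr // ltW // S5b_gt0.
have zz : z * z = S5d K by rewrite -expr2 sqr_sqrtr // ltW // S5d_gt0.
have xz : x * z = c by rewrite -sqrtrM ?sqrt_S5bd // ltW // S5b_gt0.
have zx : z * x = c by rewrite mulrC.
apply/matrixP => i j; rewrite mul_diag_mx mul_mx_diag !mxE.
case: i => [[|[|[|i]]] Hi] //; case: j => [[|[|[|j]]] Hj] //=;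
  by rewrite ?mulr1 ?xx ?zz ?xz ?zx // mulrAC xx mulrC.
Qed.

Lemma S5_doubly_stochastic : doubly_stochastic (S5 K).
Proof.
have rowb : (K + 1) * S5b K + c = 1.
  by rewrite /S5b mulrC divfK ?subrK // lt0r_neq0 ?addr_gt0.
have c_gt0 := S5c_gt0; have b_gt0 := S5b_gt0; have d_gt0 := S5d_gt0.
have Kb_gt0 : 0 < K * S5b K by rewrite mulr_gt0.
split; [|split] => [i j|i|j]; rewrite ?big_ord_recr ?big_ord0 !mxE.
- by case: i => [[|[|[|i]]] Hi] //; case: j => [[|[|[|j]]] Hj] //=; rewrite ltW.
- by case: i => [[|[|[|i]]] Hi] //=; rewrite /S5d; lra.
- by case: j => [[|[|[|j]]] Hj] //=; rewrite /S5d; lra.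
Qed.

Lemma A5_gt0 i j : 0 < A5 K i j.
Proof. by rewrite !mxE; case: i => [[|[|[|i]]] Hi] //; case: j => [[|[|[|j]]] Hj]. Qed.

Lemma sinkhorn_A5 : sinkhorn (A5 K) = S5 K.
Proof.
apply: sinkhorn_eq A5_gt0 _; split; first exact: S5_doubly_stochastic.
pose xxz (i : 'I_3) := nth 0 [:: x; x; z] i.
have xxz_gt0 i : 0 < xxz i.
  by case: i => [[|[|[|i]]] Hi] //=; rewrite sqrtr_gt0 ?S5b_gt0 ?S5d_gt0.
by exists xxz, xxz; rewrite -S5_scaling.
Qed.

Lemma S5c_closed : K != 1 -> c = (s - 3) / (2 * (K - 1)).
Proof.
move=> K_neq1; have s_gt1 := sqrt45_gt1; have s_sqr := sqrt45_sqr.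
have s3_neq0 : s - 3 != 0 by apply: contra_neq K_neq1 => s3; nra.
have -> : 2 * (K - 1) = (s - 3) * (s + 3) / 2.
  by rewrite -subr_sqr s_sqr; field.
by rewrite /S5c; field; rewrite s3_neq0 /=; lra.
Qed.

Lemma S5b_closed : K != 1 -> (2 * K + 1 - s) / (2 * (K ^+ 2 - 1)) = S5b K.
Proof.
move=> K_neq1; have K1_neq0 : K - 1 != 0 by rewrite subr_eq0.
have K1p_neq0 : K + 1 != 0 by rewrite lt0r_neq0 ?addr_gt0.
have -> : K ^+ 2 - 1 = (K - 1) * (K + 1) by ring.
by rewrite /S5b S5c_closed //; field; rewrite K1_neq0 K1p_neq0.
Qed.

Lemma S5d_closed : K != 1 -> (K + 2 - s) / (K - 1) = S5d K.
Proof.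
move=> K_neq1; have K1_neq0 : K - 1 != 0 by rewrite subr_eq0.
by rewrite /S5d S5c_closed //; field.
Qed.

Lemma mul_S5c_sqr_le1 : K * c ^+ 2 <= 1.
Proof. by move: S5c_root S5c_gt0 S5c_lt_half; nra. Qed.

Lemma S5_dist_le i j : `|S5 K i j - (1%:M : 'M[R]_3) i j| <= 5 * c.
Proof.
have c_gt0 := S5c_gt0; have b_gt0 := S5b_gt0.
have c_lt := S5c_lt_half; have root := S5c_root.
have rowb : (K + 1) * S5b K = 1 - c.
  by rewrite /S5b mulrC divfK // lt0r_neq0 ?addr_gt0.
have inv_le : 1 <= 4 * (K + 1) * c.
  have : 0 < c * (4 * K + 1 - (K - 1) * c).
    by rewrite mulr_gt0 //; move: K_gt0; nra.
  lra.
have b_le : S5b K <= 4 * c by move: K_gt0; nra.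
rewrite !mxE /S5d.
by case: i => [[|[|[|i]]] Hi] //; case: j => [[|[|[|j]]] Hj] //=;
  rewrite ?subr0 ler_norml; apply/andP; split; lra.
Qed.

End A5Scaling.

Lemma S5c_cvg0 (R : realType) : S5c x @[x --> +oo] --> (0 : R).
Proof.
apply/cvgr0Pnorm_lt => e e_gt0; near=> L.
have L_gt0 : 0 < L by near: L; exact: nbhs_pinfty_gt (num_real _).
have Le : 1 < L * e ^+ 2.
  rewrite -ltr_pdivrMr ?exprn_gt0 //.
  by near: L; exact: nbhs_pinfty_gt (num_real _).
have c_gt0 := S5c_gt0 L.
have c2_lt : S5c L ^+ 2 < e ^+ 2.
  by rewrite -(ltr_pM2l L_gt0); apply: le_lt_trans (mul_S5c_sqr_le1 L_gt0) Le.
by rewrite gtr0_norm //; nra.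
Unshelve. all: by end_near.
Qed.

Lemma sinkhorn_A5_cvg (R : realType) (i j : 'I_3) :
  (fun L : R => sinkhorn (A5 L) i j) @ +oo --> (1%:M : 'M[R]_3) i j.
Proof.
apply/cvgrPdistC_lt => e e_gt0.
have e5_gt0 : 0 < e / 5 by rewrite divr_gt0.
have /cvgr0Pnorm_lt/(_ _ e5_gt0) c_small := @S5c_cvg0 R.
near=> L.
have L_gt0 : 0 < L by near: L; exact: nbhs_pinfty_gt (num_real _).
have : `|S5c L| < e / 5 by near: L.
rewrite sinkhorn_A5 // gtr0_norm ?S5c_gt0 // => c_lt.
by apply: le_lt_trans (S5_dist_le L_gt0 i j) _; lra.
Unshelve. all: by end_near.
Qed.

Unset Implicit Arguments.

Theorem mainTheorem10 (R : realType) (K : R) (hK0 : 0 < K) (hK1 : K != 1) :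
  let a := K * (2 * K + 1 - Num.sqrt (4 * K + 5)) / (2 * (K ^+ 2 - 1)) in
  let b := (2 * K + 1 - Num.sqrt (4 * K + 5)) / (2 * (K ^+ 2 - 1)) in
  let d := (K + 2 - Num.sqrt (4 * K + 5)) / (K - 1) in
  let c := Num.sqrt (b * d) in
  [/\ sinkhorn (A5 K) = mx3 [:: [:: a; b; c]; [:: b; a; c]; [:: c; c; d]],
      exists x z : R, [/\ 0 < x, 0 < z, x ^+ 2 = b, z ^+ 2 = d &
        sinkhorn (A5 K) = diag3 x x z *m A5 K *m diag3 x x z] &
      forall i j : 'I_3,
        (fun L : R => sinkhorn (A5 L) i j) @ +oo --> (1%:M : 'M[R]_3) i j].
Proof.
move=> a b d c.
have Eb : b = S5b K := S5b_closed hK0 hK1.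
have Ea : a = K * S5b K by rewrite -Eb /a /b mulrA.
have Ed : d = S5d K := S5d_closed hK0 hK1.
have Ec : c = S5c K by rewrite /c Eb Ed sqrt_S5bd.
split; last exact: sinkhorn_A5_cvg.
  by rewrite sinkhorn_A5 // Ea Eb Ec Ed.
exists (Num.sqrt (S5b K)), (Num.sqrt (S5d K)); split.
- by rewrite sqrtr_gt0 S5b_gt0.
- by rewrite sqrtr_gt0 S5d_gt0.
- by rewrite Eb sqr_sqrtr // ltW // S5b_gt0.
- by rewrite Ed sqr_sqrtr // ltW // S5d_gt0.
- by rewrite sinkhorn_A5 // S5_scaling.
Qed.
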